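(* Let $I,I'\subsetneq S$ and let $X,X'\subsetneq S$ with $\tau(I)\subset X$ and $\tau(I')\subset X'$. If $w_Ih_X=w_{I'}h_{X'}$ in $W$, then $I=I'$ and $X=X'$.
   Context: $(W,S)$ is the affine Weyl group of type $\tilde A_{n-1}$ ($n\ge2$), with $S=\{s_i:i\in\mathbb Z/n\mathbb Z\}$ identified with $\mathbb Z/n\mathbb Z$, and $\tau(s_i)=s_{i+1}$ (extended to subsets). For $X\subsetneq S$, choose $\aleph\in S\setminus X$, order $S$ as $\aleph<\aleph+1<\dots<\aleph-1$, write $X=\{x_1<\dots<x_d\}$ and set $h_X=s_{x_d}\cdots s_{x_1}$ (independent of $\aleph$). For $I\subsetneq S$, $w_I$ is the longest element of the finite parabolic subgroup $W_I$. *)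

(* Model of the affine Weyl group of type ~A_{n-1} as the
   group of affine permutations of Z (a faithful representation). *)
From mathcomp Require Import all_boot all_order all_algebra.
Set Implicit Arguments. Unset Strict Implicit. Unset Printing Implicit Defensive.
Import Order.TTheory GRing.Theory Num.Theory.

Definition srefl (n : nat) (i : 'I_n) (x : int) : int :=
  let r := intdiv.modz x (Posz n) in
  if r == Posz (i : nat) then (x + 1)%R
  else if r == Posz (i.+1 %% n)%N then (x - 1)%R
  else x.

(* A word [:: a1; ...; ak] represents the product s_{a1} s_{a2} ... s_{ak}
   (product = composition of maps, so s_{ak} acts first). *)
Fixpoint wact (n : nat) (w : seq 'I_n) (x : int) : int :=
  match w with
  | [::] => x
  | a :: w' => srefl a (wact w' x)
  end.

Definition weq (n : nat) (u v : seq 'I_n) : Prop := forall x, wact u x = wact v x.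

(* ell(u) <= ell(v), where ell is Coxeter length (minimal word length). *)
Definition ell_le (n : nat) (u v : seq 'I_n) : Prop :=
  forall v', weq v v' -> exists2 u', weq u u' & size u' <= size v'.

Definition is_longest (n : nat) (I : {set 'I_n}) (u : seq 'I_n) : Prop :=
  all (fun a => a \in I) u /\
  forall v : seq 'I_n, all (fun a => a \in I) v -> ell_le v u.

Definition tauS (n : nat) (I : {set 'I_n}) : {set 'I_n} := [set ordS i | i in I].

(* h_X = s_{x_d} ... s_{x_1} where x_1 < ... < x_d in the order
   aleph < aleph+1 < ... < aleph-1, for some aleph not in X (here: a picked one). *)
Definition aleph (n : nat) (X : {set 'I_n}) : nat :=
  if [pick a in ~: X] is Some a then (a : nat) else 0.

Definition hkey (n : nat) (X : {set 'I_n}) (x : 'I_n) : nat :=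
  ((x : nat) + n - aleph X) %% n.

Definition hword (n : nat) (X : {set 'I_n}) : seq 'I_n :=
  rev (sort (fun x y => hkey X x <= hkey X y) (enum X)).

(* Realise W as the affine permutations of Z, s_i exchanging the residue classes
   of i and i + 1 mod n.  For a proper I, W_I preserves the I-blocks: the maximal
   intervals [lo, hi] whose points other than hi lie in classes of I.  Counting
   inversions inside blocks computes the length in W_I, which forces the longest
   element w_I to reverse every block, x |-> lo + hi - x.  The element h_X sends z
   to z - 1 when z - 1 lies in a class of X, and moves no other z downwards.
   If w_I h_X = w_J h_Y and [lo, hi] is an I-block, then hi lies in a class of
   tau(I), hence of X, so the left side sends hi + 1 to lo, while the right side
   sends it to w_J y for some y >= hi; as w_J preserves J-blocks, [lo, hi) lies
   in classes of J, whence I is contained in J.  Once I = J, cancelling w_I and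
   evaluating at i + 1 for i in X shows that X is contained in Y. *)

From mathcomp Require Import all_boot all_order all_algebra zify.
From Stdlib Require Import Classical_Prop.
Set Implicit Arguments. Unset Strict Implicit. Unset Printing Implicit Defensive.
Import Order.TTheory GRing.Theory Num.Theory intdiv.

Section AffinePermutations.
Local Open Scope ring_scope.
Variable n : nat.
Hypothesis n_gt1 : (1 < n)%N.

Let nZ_gt0 : 0 < n%:Z. Proof. by rewrite ltz_nat ltnW. Qed.
Let nZ_neq0 : n%:Z != 0. Proof. by rewrite gt_eqF. Qed.

Fact cls_subproof (z : int) : (`|(z %% n)%Z| < n)%N.
Proof. by rewrite -ltz_nat gez0_abs ?modz_ge0 ?ltz_pmod. Qed.

Definition cls (z : int) : 'I_n := Ordinal (cls_subproof z).

Lemma modz_cls z : (z %% n)%Z = (cls z : nat)%:Z.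
Proof. by rewrite /= gez0_abs ?modz_ge0. Qed.

Lemma divz_cls z : z = (z %/ n)%Z * n + (cls z : nat)%:Z.
Proof. by rewrite -modz_cls -divz_eq. Qed.

Lemma cls_translate z (t : int) : cls (z + t * n) = cls z.
Proof. by apply: val_inj; rewrite /= (addrC z) modzMDl. Qed.

Lemma cls_ord (i : 'I_n) : cls (i : nat)%:Z = i.
Proof. by apply: val_inj; rewrite /= modz_nat modn_small. Qed.

Lemma clsS z : cls (z + 1) = ordS (cls z).
Proof.
apply: val_inj; apply/eqP; rewrite -eqz_nat -modz_cls /= -modz_nat.
by rewrite -addn1 PoszD -modz_cls modzDml.
Qed.

Lemma cls_eq_translate x y : cls x = cls y -> y = x + (divz y n - divz x n) * n.
Proof. by move=> e; rewrite {1}(divz_cls y) {1}(divz_cls x) -e; lia. Qed.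

Lemma ordS_neq (a : 'I_n) : ordS a != a.
Proof.
rewrite -val_eqE /=; have a_lt := ltn_ord a.
case: (ltngtP a.+1 n) => [lt|gt|a_eq]; last by rewrite a_eq modnn; lia.
- by rewrite modn_small ?gtn_eqF.
- by move: gt; rewrite ltnS leqNgt a_lt.
Qed.

Lemma sreflE (a : 'I_n) z :
  srefl a z = if cls z == a then z + 1 else if cls z == ordS a then z - 1 else z.
Proof. by rewrite /srefl modz_cls !eqz_nat. Qed.

Lemma clsB z : ordS (cls (z - 1)) = cls z.
Proof. by rewrite -clsS subrK. Qed.

Lemma srefl_up (a : 'I_n) z : cls z = a -> srefl a z = z + 1.
Proof. by rewrite sreflE => ->; rewrite eqxx. Qed.

Lemma srefl_down (a : 'I_n) z : cls z = a -> srefl a (z + 1) = z.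
Proof.
by move=> za; rewrite sreflE clsS za (negbTE (ordS_neq a)) eqxx addrK.
Qed.

Lemma sreflK (a : 'I_n) : involutive (srefl a).
Proof.
move=> z; rewrite [srefl a z]sreflE.
case: eqP => [/srefl_down //|za]; case: eqP => [zb|zb].
- by rewrite srefl_up ?subrK //; apply: ordS_inj; rewrite clsB.
- by rewrite sreflE; do 2 case: eqP => // _.
Qed.

Lemma srefl_translate (a : 'I_n) z (t : int) : srefl a (z + t * n) = srefl a z + t * n.
Proof. by rewrite !sreflE cls_translate; case: eqP => _; [|case: eqP => _]; lia. Qed.

Lemma srefl_near (a : 'I_n) z : z - 1 <= srefl a z <= z + 1.
Proof. by rewrite sreflE; case: eqP => _; [|case: eqP => _]; lia. Qed.

Lemma wact_cat (u v : seq 'I_n) x : wact (u ++ v) x = wact u (wact v x).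
Proof. by elim: u => //= a u ->. Qed.

Lemma wact_revK (u : seq 'I_n) : cancel (wact u) (wact (rev u)).
Proof. by elim: u => //= a u IH x; rewrite rev_cons -cats1 wact_cat /= sreflK. Qed.

Lemma wactK (u : seq 'I_n) : cancel (wact (rev u)) (wact u).
Proof. by have := wact_revK (rev u); rewrite revK. Qed.

Lemma wact_inj (u : seq 'I_n) : injective (wact u).
Proof. exact: can_inj (wact_revK u). Qed.

Lemma wact_translate (u : seq 'I_n) z (t : int) : wact u (z + t * n) = wact u z + t * n.
Proof. by elim: u => //= a u ->; rewrite srefl_translate. Qed.

Lemma increasing_run (m : int -> int) a b : a <= b ->
  (forall z, a <= z < b -> m z < m (z + 1)) -> m a + (b - a) <= m b.
Proof.
move=> ab; have [k ->] : exists k : nat, b = a + k%:Z.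
  by exists `|b - a|%N; rewrite gez0_abs ?subr_ge0 //; lia.
rewrite [a + _]addrC addrK addrC; elim: k => [|k IH] incr; first by rewrite !addr0.
have := IH (fun z hz => incr z ltac:(lia)); have := incr (a + k%:Z) ltac:(lia).
rewrite intS [1 + _]addrC !addrA; move: (m (a + k)) (m (a + k + 1)) => u v; lia.
Qed.

Lemma increasing_run_id (m : int -> int) lo hi x : lo <= x <= hi ->
  lo <= m lo -> m hi <= hi -> (forall z, lo <= z < hi -> m z < m (z + 1)) -> m x = x.
Proof.
case/andP=> lo_x x_hi lo_m m_hi incr.
have := increasing_run lo_x (fun z hz => incr z ltac:(lia)).
have := increasing_run x_hi (fun z hz => incr z ltac:(lia)).
lia.
Qed.

Definition swap_pair (a : 'I_n) u v :=
  exists2 q, cls q = a & (u = q /\ v = q + 1) \/ (u = q + 1 /\ v = q).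

Lemma swap_pair_sym a u v : swap_pair a u v -> swap_pair a v u.
Proof. by case=> q qa uv; exists q => //; tauto. Qed.

Lemma srefl_inversion (a : 'I_n) u v : u < v -> srefl a v < srefl a u -> swap_pair a u v.
Proof.
move=> uv; have := srefl_near a u; have := srefl_near a v.
have /eqP ne : srefl a u != srefl a v by rewrite (inj_eq (can_inj (sreflK a))) lt_eqF.
case: (eqVneq (cls u) a) => [ua|ua] hv hu ss; first by exists u => //; left; split; lia.
have : srefl a u <= u by rewrite sreflE (negbTE ua); case: eqP => _; lia.
lia.
Qed.

Lemma srefl_order_change (a : 'I_n) u v : u != v ->
  (srefl a v < srefl a u) != (v < u) -> swap_pair a u v.
Proof.
case/lt_total/orP => [uv|vu]; first by rewrite (lt_gtF uv) eqbF_neg negbK => /(srefl_inversion uv).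
rewrite vu eqb_id -leNgt le_eqVlt (inj_eq (can_inj (sreflK a))) gt_eqF //=.
by move/(srefl_inversion vu)/swap_pair_sym.
Qed.

Lemma swap_pair_translate (w : seq 'I_n) a x1 y1 x2 y2 : x1 < y1 -> x2 < y2 ->
  swap_pair a (wact w x1) (wact w y1) -> swap_pair a (wact w x2) (wact w y2) ->
  exists t : int, x2 = x1 + t * n /\ y2 = y1 + t * n.
Proof.
move=> xy1 xy2 [q1 q1a c1] [q2 q2a c2]; set t := divz q2 n - divz q1 n; exists t.
have q2E : q2 = q1 + t * n by apply: cls_eq_translate; rewrite q1a q2a.
have back z : wact w z = q2 \/ wact w z = q2 + 1 -> z = x1 + t * n \/ z = y1 + t * n.
  by case: c1 => -[e1 f1] [] hz; [left|right|right|left]; apply: (@wact_inj w);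
     rewrite wact_translate hz q2E ?e1 ?f1 //; lia.
have := back x2; have := back y2; case: c2 => -[-> ->]; lia.
Qed.

Section Blocks.
Variable A : {set 'I_n}.

Definition same_block x y := forall z, (x <= z < y) || (y <= z < x) -> cls z \in A.

(* The A-blocks are the orbits of the parabolic subgroup W_A on Z. *)
Definition block lo hi := [/\ lo <= hi, forall z, lo <= z < hi -> cls z \in A,
  cls (lo - 1) \notin A & cls hi \notin A].

Lemma same_block_sym x y : same_block x y -> same_block y x.
Proof. by move=> xy z hz; apply: xy; rewrite orbC. Qed.

Lemma same_block_trans x y w : same_block x y -> same_block y w -> same_block x w.
Proof.
move=> xy yw z hz; case: (boolP ((x <= z < y) || (y <= z < x))) => [/xy //|out].
by apply: yw; move: out hz; rewrite !negb_or !negb_and -!ltNge -!leNgt; lia.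
Qed.

Lemma same_block_srefl (a : 'I_n) x : a \in A -> same_block x (srefl a x).
Proof.
move=> aA z; rewrite sreflE; case: eqP => [xa|_] hz.
  by rewrite (_ : z = x) ?xa //; lia.
move: hz; case: eqP => [xa|_] hz; last lia.
rewrite (_ : z = x - 1); last lia.
suff -> : cls (x - 1) = a by [].
by apply: ordS_inj; rewrite clsB.
Qed.

Lemma same_block_wact (u : seq 'I_n) x : all (fun a => a \in A) u -> same_block x (wact u x).
Proof.
elim: u => [|a u IH] /=; first by move=> _ z; lia.
by case/andP=> aA /IH; move/same_block_trans; apply; apply: same_block_srefl.
Qed.

Definition block_preserving (m : int -> int) := forall y, same_block y (m y).

Lemma block_range lo hi x y : block lo hi -> lo <= x <= hi -> same_block x y -> lo <= y <= hi.
Proof.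
case=> _ _ lo_out hi_out hx xy; apply/andP; split; rewrite leNgt; apply/negP => out.
- by move: lo_out; rewrite xy //; lia.
- by move: hi_out; rewrite xy //; lia.
Qed.

Lemma block_preserving_ends (m : int -> int) lo hi : block lo hi -> block_preserving m ->
  lo <= m lo <= hi /\ lo <= m hi <= hi.
Proof.
move=> blk mb; have [lo_hi _ _ _] := blk.
have lo_in : lo <= lo <= hi by rewrite lexx.
have hi_in : lo <= hi <= hi by rewrite lexx andbT.
by split; apply: block_range blk _ (mb _).
Qed.

Lemma increasing_block_id (m : int -> int) lo hi x : block lo hi -> lo <= x <= hi ->
  block_preserving m -> (forall p, cls p \in A -> m p < m (p + 1)) -> m x = x.
Proof.
move=> blk hx mb incr; have [_ inA _ _] := blk; have [m_lo m_hi] := block_preserving_ends blk mb.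
by apply: (increasing_run_id hx) => [||z /inA /incr]; lia.
Qed.

Lemma decreasing_block_rev (m : int -> int) lo hi x : block lo hi -> lo <= x <= hi ->
  block_preserving m -> (forall p, cls p \in A -> m (p + 1) < m p) -> m x = lo + hi - x.
Proof.
move=> blk hx mb decr; have [_ inA _ _] := blk; have [m_lo m_hi] := block_preserving_ends blk mb.
suff : lo + hi - m x = x by lia.
by apply: (increasing_run_id (m := fun z => lo + hi - m z) hx) => [||z /inA /decr]; lia.
Qed.

Hypothesis A_proper : A != setT.

Lemma exists_notin_cls x (d : int) : d ^+ 2 = 1 ->
  exists2 k : nat, (k < n)%N & cls (x + d * k%:Z) \notin A.
Proof.
move=> d2; have [j jA] : exists j, j \notin A.
  by apply/existsP; move: A_proper; apply: contraR; rewrite negb_exists => /forallP jA;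
     apply/eqP/setP => j; rewrite inE; apply/negPn.
exists `|modz (d * ((j : nat)%:Z - x)) n|%N; first by rewrite -ltz_nat gez0_abs ?modz_ge0 ?ltz_pmod.
rewrite gez0_abs ?modz_ge0 // /modz mulrBr mulrA -expr2 d2 mul1r addrA [x + _]addrC subrK.
by rewrite mulrA -mulNr cls_translate cls_ord.
Qed.

Lemma block_exists x : exists lo hi, block lo hi /\ lo <= x <= hi.
Proof.
have hiP : exists k : nat, cls (x + k%:Z) \notin A.
  by have [k _] := exists_notin_cls x (expr1n _ 2); rewrite mul1r; exists k.
have loP : exists k : nat, cls (x - 1 - k%:Z) \notin A.
  have [k _] := exists_notin_cls (x - 1) (etrans (sqrrN 1) (expr1n _ 2)).
  by rewrite mulN1r; exists k.
case: (ex_minnP hiP) => khi hi_out hi_min; case: (ex_minnP loP) => klo lo_out lo_min.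
exists (x - klo%:Z), (x + khi%:Z); split; last lia.
split; [lia| |by rewrite addrAC|done].
move=> z hz; apply/negPn/negP => zA; case: (ltP z x) => zx.
- have := lo_min (absz (x - 1 - z)%R); rewrite gez0_abs; last lia.
  by rewrite opprB addrC subrK => /(_ zA); lia.
- have := hi_min (absz (z - x)%R); rewrite gez0_abs; last lia.
  by rewrite addrC subrK => /(_ zA); lia.
Qed.

Lemma same_block_lt x y : x <= y -> same_block x y -> y - x < n.
Proof.
move=> xy blk; have [k k_lt] := exists_notin_cls x (expr1n _ 2).
by rewrite mul1r ltNge; apply: contra => ?; apply: blk; lia.
Qed.

(* ninv w counts the pairs x < y in a common A-block with w y < w x, up to
   translation by n.  It is the length of w in W_A: no word for w is shorter
   (ninv_le_size) and some word over A attains it (exists_short_word). *)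
Definition block_inversion (w : int -> int) (p : 'I_n * 'I_n) :=
  [&& (0 < p.2)%N, [forall t : 'I_n, (t < p.2)%N ==> (cls (p.1 + t)%N%:Z \in A)]
    & w (p.1 + p.2)%N%:Z < w (p.1 : nat)%:Z].

Definition ninv (w : int -> int) : nat := \sum_(p : 'I_n * 'I_n) block_inversion w p.

Lemma eq_ninv (w1 w2 : int -> int) : w1 =1 w2 -> ninv w1 = ninv w2.
Proof. by move=> e; apply: eq_bigr => p _; rewrite /block_inversion !e. Qed.

Lemma block_inversion_at (u : seq 'I_n) x y (k : 'I_n) : x < y -> y = x + (k : nat)%:Z ->
  same_block x y -> block_inversion (wact u) (cls x, k) = (wact u y < wact u x).
Proof.
move=> xy yE xy_blk; have xE := divz_cls x; set t := divz x n in xE.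
have back (z : int) : (cls x : nat)%:Z + z = x + z + (- t) * n by lia.
have k_gt0 : (0 < k)%N by rewrite -ltz_nat; lia.
have inA : [forall i : 'I_n, (i < k)%N ==> (cls (cls x + i)%N%:Z \in A)].
  apply/forallP => i; apply/implyP => ik.
  by rewrite PoszD back cls_translate; apply: xy_blk; rewrite -ltz_nat in ik; lia.
rewrite /block_inversion /= k_gt0 inA PoszD back -[(cls x : nat)%:Z]addr0 back.
by rewrite !wact_translate addr0 -yE ltrD2r.
Qed.

Lemma block_inversion_switch (u : seq 'I_n) a p :
  block_inversion (wact (a :: u)) p != block_inversion (wact u) p ->
  (0 < p.2)%N /\ swap_pair a (wact u (p.1 : nat)%:Z) (wact u (p.1 + p.2)%N%:Z).
Proof.
rewrite /block_inversion /=; case: (posnP p.2) => [-> //|k_gt0]; case: [forall _, _] => //= flip.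
split=> //; apply: srefl_order_change flip.
by rewrite (inj_eq (@wact_inj u)) eqz_nat; lia.
Qed.

Lemma block_inversion_switch_unique (u : seq 'I_n) a p q :
  block_inversion (wact (a :: u)) p != block_inversion (wact u) p ->
  block_inversion (wact (a :: u)) q != block_inversion (wact u) q -> p = q.
Proof.
move: p q => [x1 k1] [x2 k2].
move=> /block_inversion_switch[k1_gt0 sw1] /block_inversion_switch[k2_gt0 sw2].
rewrite /= in k1_gt0 k2_gt0 sw1 sw2.
have lt1 : (x1 : nat)%:Z < (x1 + k1)%N%:Z by lia.
have lt2 : (x2 : nat)%:Z < (x2 + k2)%N%:Z by lia.
have [t [e1 e2]] := swap_pair_translate lt1 lt2 sw1 sw2.
have /eqP t0 : t == 0.
  by have := ltn_ord x1; have := ltn_ord x2; move: e1; rewrite -!ltz_nat; nia.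
move: e1 e2; rewrite t0 mul0r !addr0 !PoszD => e1; rewrite e1 => /addrI e2.
by congr pair; apply: val_inj; apply/eqP; rewrite -eqz_nat ?e1 ?e2.
Qed.

Lemma ninv_switch (u : seq 'I_n) a p :
  block_inversion (wact (a :: u)) p != block_inversion (wact u) p ->
  (ninv (wact (a :: u)) + block_inversion (wact u) p =
   ninv (wact u) + block_inversion (wact (a :: u)) p)%N.
Proof.
move=> sw; rewrite /ninv (bigD1 p) // [in RHS](bigD1 p) //=.
under eq_bigr => q qp.
  have -> : block_inversion (wact (a :: u)) q = block_inversion (wact u) q.
    by apply/eqP; apply: contraNT qp => /block_inversion_switch_unique/(_ sw) ->.
over.
lia.
Qed.

Lemma ninv_srefl (u : seq 'I_n) a : (ninv (wact (a :: u)) <= (ninv (wact u)).+1)%N.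
Proof.
case: (pickP (fun p => block_inversion (wact (a :: u)) p != block_inversion (wact u) p)).
  move=> p /ninv_switch.
  by case: (block_inversion (wact (a :: u)) p); case: (block_inversion (wact u) p); lia.
move=> same; suff -> : ninv (wact (a :: u)) = ninv (wact u) by [].
by apply: eq_bigr => p _; move/negbT: (same p); rewrite negbK => /eqP ->.
Qed.

Lemma ninv_le_size (u : seq 'I_n) : (ninv (wact u) <= size u)%N.
Proof.
elim: u => [|a u IH]; last by apply: leq_trans (ninv_srefl u a) _.
rewrite /ninv big1 // => -[x k] _; rewrite /block_inversion /=.
by rewrite ltNge PoszD lerDl le0z_nat !andbF.
Qed.

Lemma ninv_descent (u : seq 'I_n) a x y p : a \in A -> all (fun b => b \in A) u ->
  x < y -> wact u x = p -> wact u y = p + 1 -> cls p = a ->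
  ninv (wact (a :: u)) = (ninv (wact u)).+1.
Proof.
move=> aA uA xy wx wy pa.
have xy_blk : same_block x y.
  apply: same_block_trans (same_block_wact (x := x) uA) _; rewrite wx.
  apply: same_block_trans (same_block_sym (same_block_wact (x := y) uA)); rewrite wy.
  by move=> z hz; rewrite (_ : z = p) ?pa //; lia.
have k_lt : (absz (y - x) < n)%N.
  by rewrite -ltz_nat gez0_abs ?subr_ge0 ?same_block_lt // ltW.
pose k : 'I_n := Ordinal k_lt.
have yE : y = x + (k : nat)%:Z by rewrite /= gez0_abs; lia.
have before : block_inversion (wact u) (cls x, k) = false.
  by rewrite (block_inversion_at _ xy yE xy_blk) wx wy gtrDl ltr10.
have after : block_inversion (wact (a :: u)) (cls x, k) = true.
  by rewrite (block_inversion_at _ xy yE xy_blk) /= wx wy srefl_down // srefl_up // ltrDl ltr01.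
by have := @ninv_switch u a (cls x, k); rewrite before after addn0 addn1 => /(_ isT).
Qed.

Lemma exists_short_word (u : seq 'I_n) : all (fun a => a \in A) u ->
  exists2 v, weq u v & (size v <= ninv (wact u))%N.
Proof.
move: {2}(ninv (wact u)) (erefl (ninv (wact u))) => N.
elim/ltn_ind: N u => N IH u uN uA; set m := wact (rev u).
(* A descent of the inverse m at p is removed by s_(cls p), which lowers ninv;
   without descents m increases along every block, hence is the identity. *)
case: (classic (exists p, cls p \in A /\ m (p + 1) < m p)) => [[p [pA desc]]|no_desc].
  have iuA : all (fun a => a \in A) (cls p :: u) by rewrite /= pA.
  have wx : wact (cls p :: u) (m (p + 1)) = p by rewrite /= wactK srefl_down.
  have wy : wact (cls p :: u) (m p) = p + 1 by rewrite /= wactK srefl_up.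
  have cancel_p : ninv (wact [:: cls p, cls p & u]) = N.
    by rewrite -uN; apply: eq_ninv => z; rewrite /= sreflK.
  have := ninv_descent pA iuA desc wx wy erefl; rewrite cancel_p => ninv_iu.
  have [|v uv v_size] := IH _ _ (cls p :: u) erefl iuA; first lia.
  by exists (cls p :: v) => [z|/=]; [rewrite /= -uv /= sreflK|lia].
exists [::] => // x; suff m_id : m x = x by rewrite -[x in LHS]m_id wactK.
have [lo [hi [blk hx]]] := block_exists x.
apply: (increasing_block_id blk hx) => [z|q qA]; first by apply: same_block_wact; rewrite all_rev.
rewrite lt_neqAle (inj_eq (@wact_inj _)) lt_eqF ?ltrDl //= leNgt.
by apply/negP => desc; apply: no_desc; exists q.
Qed.

Lemma longest_descent (u : seq 'I_n) p : is_longest A u -> cls p \in A ->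
  wact (rev u) (p + 1) < wact (rev u) p.
Proof.
case=> uA longest pA; rewrite ltNge le_eqVlt (inj_eq (@wact_inj _)) lt_eqF ?ltrDl //=.
(* An ascent of the inverse at p would make s_(cls p) u longer than u. *)
apply/negP => asc; have iuA : all (fun a => a \in A) (cls p :: u) by rewrite /= pA.
have := ninv_descent pA uA asc (wactK _ _) (wactK _ _) erefl.
have [v uv v_size] := exists_short_word uA.
have [w iuw w_size] := longest _ iuA v uv.
by rewrite (eq_ninv iuw); have := ninv_le_size w; lia.
Qed.

Lemma longest_reverses_block (u : seq 'I_n) lo hi x : is_longest A u -> block lo hi ->
  lo <= x <= hi -> wact u x = lo + hi - x.
Proof.
move=> longest blk hx; have [uA _] := longest.
have rev_A : block_preserving (wact (rev u)) by move=> z; apply: same_block_wact; rewrite all_rev.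
have x_in : lo <= lo + hi - x <= hi by lia.
have := decreasing_block_rev blk x_in rev_A (fun q => longest_descent longest).
by rewrite subKr => rev_x; rewrite -[x in LHS]rev_x wactK.
Qed.

Lemma longest_unique (u v : seq 'I_n) : is_longest A u -> is_longest A v -> wact u =1 wact v.
Proof.
move=> u_longest v_longest x; have [lo [hi [blk hx]]] := block_exists x.
by rewrite (longest_reverses_block u_longest blk hx) (longest_reverses_block v_longest blk hx).
Qed.

End Blocks.

Lemma wact_id (L : seq 'I_n) z :
  (forall a, a \in L -> (cls z != a) && (cls z != ordS a)) -> wact L z = z.
Proof.
elim: L => //= a L IH zL; have /andP[za zSa] := zL a (mem_head a L).
by rewrite IH => [|b bL]; [rewrite sreflE (negbTE za) (negbTE zSa)|apply: zL; rewrite inE bL orbT].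
Qed.

Lemma wact_rev_ascending (L : seq 'I_n) z :
  pairwise (fun b a => (a != b) && (ordS a != b)) L ->
  if cls (z - 1) \in L then wact (rev L) z = z - 1 else z <= wact (rev L) z.
Proof.
elim: L z => [|b L IH] z /=; first by rewrite lexx.
case/andP=> /allP bL /IH {}IH; rewrite rev_cons -cats1 wact_cat /= inE sreflE.
have bL_ne a : a \in L -> (a != b) && (ordS a != b) by move=> /bL.
case: (cls z =P b) => [zb|zb].
  have -> : cls (z - 1) == b = false.
    by apply/eqP => zb'; move: (ordS_neq b); rewrite -{1}zb' clsB zb eqxx.
  have -> : cls (z - 1) \in L = false.
    by apply/negP => /bL_ne /andP[_]; rewrite clsB zb eqxx.
  have bnL : b \notin L by apply/negP => /bL_ne; rewrite eqxx.
  by have := IH (z + 1); rewrite addrK zb (negbTE bnL) /=; apply: le_trans; rewrite lerDl.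
case: (cls z =P ordS b) => [zSb|zSb].
  have zb' : cls (z - 1) = b by apply: ordS_inj; rewrite clsB.
  rewrite zb' eqxx /=; apply: wact_id => a; rewrite mem_rev => /bL_ne /andP[ab Sab].
  by rewrite zb' eq_sym ab eq_sym Sab.
have -> : cls (z - 1) == b = false by apply/eqP => zb'; apply: zSb; rewrite -zb' clsB.
exact: IH.
Qed.

Section CoxeterElement.
Variable X : {set 'I_n}.
Hypothesis X_proper : X != setT.

Lemma aleph_notin : exists2 a0 : 'I_n, a0 \notin X & aleph X = a0.
Proof.
rewrite /aleph; case: pickP => [a0|none]; first by rewrite inE; exists a0.
by case/negP: X_proper; apply/eqP/setP => a; move: (none a); rewrite !inE => /negbFE.
Qed.

Lemma hkeyE (a : 'I_n) : hkey X a = ((a + (n - aleph X)) %% n)%N.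
Proof. by rewrite /hkey; have [a0 _ ->] := aleph_notin; rewrite addnBA // ltnW. Qed.

Lemma hkey_inj : injective (hkey X).
Proof.
move=> a b; rewrite !hkeyE => /eqP; rewrite eqn_modDr !modn_small // => /eqP.
exact: val_inj.
Qed.

Lemma hkey_ordS (a : 'I_n) : hkey X (ordS a) = ((hkey X a).+1 %% n)%N.
Proof. by rewrite !hkeyE /= (modnDml a.+1) -[in RHS]addn1 modnDml addn1 addSn. Qed.

Lemma hkey_lt_ordS (a b : 'I_n) : b \in X -> (hkey X b < hkey X a)%N -> ordS a != b.
Proof.
move=> bX ba; apply/eqP => ab; have := hkey_ordS a; rewrite ab.
have a_lt : (hkey X a < n)%N by rewrite hkeyE ltn_mod; lia.
case: (ltngtP (hkey X a).+1 n) => [lt|gt|a_last]; first by rewrite modn_small //; lia.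
  by move: gt; rewrite ltnS leqNgt a_lt.
have [a0 a0X a0E] := aleph_notin.
have hkey_a0 : hkey X a0 = 0%N by rewrite hkeyE a0E subnKC ?modnn // ltnW.
by rewrite a_last modnn -hkey_a0 => /hkey_inj ba0; move: bX; rewrite ba0 (negbTE a0X).
Qed.

Lemma hword_ascending :
  pairwise (fun b a => (a != b) && (ordS a != b))
    (sort (fun x y => hkey X x <= hkey X y)%N (enum X)).
Proof.
set L := sort _ _; have LX : all (fun a => a \in X) L by apply/allP => a; rewrite mem_sort mem_enum.
have L_le : pairwise (fun x y => hkey X x <= hkey X y)%N L.
  by rewrite -sorted_pairwise ?sort_sorted // => [x y|x y z]; [apply: leq_total|apply: leq_trans].
have L_ne : pairwise [rel x y | x != y] L by rewrite -uniq_pairwise sort_uniq enum_uniq.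
apply: (sub_in_pairwise (P := mem X) (r := [rel x y | (hkey X x <= hkey X y)%N && (x != y)])) LX _.
  move=> b a bX aX /andP[ba_le ba_ne]; rewrite eq_sym ba_ne hkey_lt_ordS //.
  by rewrite ltn_neqAle ba_le andbT; apply: contra ba_ne => /eqP/hkey_inj ->.
by rewrite pairwise_relI L_le.
Qed.

Lemma hword_spec z :
  if cls (z - 1) \in X then wact (hword X) z = z - 1 else z <= wact (hword X) z.
Proof. by have := wact_rev_ascending z hword_ascending; rewrite mem_sort mem_enum. Qed.

End CoxeterElement.

Lemma parabolic_subset_of_weq (I J X Y : {set 'I_n}) (wI wJ : seq 'I_n) :
  I != setT -> X != setT -> Y != setT -> tauS I \subset X ->
  is_longest I wI -> is_longest J wJ -> weq (wI ++ hword X) (wJ ++ hword Y) -> I \subset J.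
Proof.
move=> hI hX hY tIX wI_longest [wJ_J _] e; apply/subsetP => i iI; set p := (i : nat)%:Z.
have [lo [hi [blk hp]]] := block_exists hI p; have [_ inI _ hi_out] := blk.
have p_hi : p < hi.
  by rewrite lt_neqAle (andP hp).2 andbT; apply: contraNneq hi_out => <-; rewrite cls_ord.
have hiX : cls hi \in X.
  by apply: (subsetP tIX); rewrite -clsB; apply: imset_f; apply: inI; lia.
have hX_hi : wact (hword X) (hi + 1) = hi by have := hword_spec hX (hi + 1); rewrite addrK hiX.
have wI_hi : wact wI hi = lo by rewrite (longest_reverses_block hI wI_longest blk) ?addrK //; lia.
have := e (hi + 1); rewrite !wact_cat hX_hi wI_hi; set y := wact (hword Y) (hi + 1) => lo_y.
have hi_y : hi <= y by have := hword_spec hY (hi + 1); rewrite addrK -/y; case: ifP => _; lia.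
have := same_block_wact (x := y) wJ_J; rewrite -lo_y => /(_ p); rewrite cls_ord; apply; lia.
Qed.

Lemma hword_subset_of_weq (I X Y : {set 'I_n}) (wI wI' : seq 'I_n) :
  I != setT -> X != setT -> Y != setT -> is_longest I wI -> is_longest I wI' ->
  weq (wI ++ hword X) (wI' ++ hword Y) -> X \subset Y.
Proof.
move=> hI hX hY wI_longest wI'_longest e; apply/subsetP => i iX; set p := (i : nat)%:Z.
have := hword_spec hX (p + 1); rewrite addrK cls_ord iX => hX_p.
have := e (p + 1); rewrite !wact_cat hX_p (longest_unique hI wI_longest wI'_longest).
move=> /wact_inj hY_p.
by have := hword_spec hY (p + 1); rewrite addrK cls_ord -hY_p; case: ifP => //; lia.
Qed.

End AffinePermutations.

Theorem lemma10p8 (n : nat) (hn : 2 <= n)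
  (I I' X X' : {set 'I_n}) (wI wI' : seq 'I_n) :
  I != setT -> I' != setT -> X != setT -> X' != setT ->
  tauS I \subset X -> tauS I' \subset X' ->
  is_longest I wI -> is_longest I' wI' ->
  weq (wI ++ hword X) (wI' ++ hword X') ->
  I = I' /\ X = X'.
Proof.
move=> hI hI' hX hX' tIX tI'X' wI_longest wI'_longest e.
have e' : weq (wI' ++ hword X') (wI ++ hword X) by move=> x; rewrite e.
have eI : I = I'.
  apply/eqP; rewrite eqEsubset.
  by rewrite (parabolic_subset_of_weq hn hI hX hX' tIX wI_longest wI'_longest e)
             (parabolic_subset_of_weq hn hI' hX' hX tI'X' wI'_longest wI_longest e').
subst I'; split=> //; apply/eqP; rewrite eqEsubset.
by rewrite (hword_subset_of_weq hn hI hX hX' wI_longest wI'_longest e)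
           (hword_subset_of_weq hn hI hX' hX wI'_longest wI_longest e').
Qed.
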